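(* Let $p$ be a prime, $e\ge1$, $G$ a finite abelian group of order $p^e$, and $R=\mathbf{Z}[G]$. Choose one representation $\rho$ in each equivalence class, and let $S=\bigoplus_\rho\mathbf{Z}[\omega_{k(\rho)}]$ (sum over the chosen representatives, $k(\rho)$ the level of $\rho$), with $R$ embedded in $S$ via $a\mapsto(j_\rho(a))_\rho$. Then the conductor of $S$ into $R$, i.e. the largest ideal $I$ of $S$ contained in $R$, is the ideal of $R$ generated by the elements $b_\rho$ for the chosen representatives $\rho$ (including $b_1$).
   Context: A representation is a group homomorphism $\rho\colon G\to\mathbf{C}^*$; its level is $k$ if $\rho(G)$ has $p^k$ elements. Two representations are equivalent if they have the same kernel. $\omega_k=\exp(2\pi i/p^k)$, $\omega=\omega_1$. For $\rho$ of level $k$, $j_\rho\colon\mathbf{Z}[G]\to\mathbf{Z}[\omega_k]$ is the ring homomorphism induced by $g\mapsto\rho(g)$. For $\rho$ of level $k>0$ set $b_\rho=\sum_{x\in G,\ \rho(x)=1}x-\sum_{\xi\in G,\ \rho(\xi)=\omega}\xi\in\mathbf{Z}[G]$; for the trivial representation $1$ set $b_1=\sum_{x\in G}x$. *)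

From HB Require Import structures.
From mathcomp Require Import all_boot all_order all_algebra all_fingroup all_field.
Set Implicit Arguments. Unset Strict Implicit. Unset Printing Implicit Defensive.
Import GRing.Theory Num.Theory.
Local Open Scope ring_scope.

(* omega_k = exp(2 pi i / p^k) in algC: (p^k).-root (-1) is the p^k-th root of
   -1 with minimal nonnegative argument, i.e. exp(i pi / p^k); its square is
   exp(2 pi i / p^k). *)
Definition omega (p k : nat) : algC := (((p ^ k)%N).-root (-1)) ^+ 2.

Definition inZomega (p k : nat) (x : algC) : Prop :=
  exists (m : nat) (c : 'I_m -> int), x = \sum_(i < m) (c i)%:~R * omega p k ^+ i.

(* a representation G -> C^* , G = the whole finite group type gT *)
Definition is_rep (gT : finGroupType) (rho : gT -> algC) : Prop :=
  (forall x y : gT, rho (x * y)%g = rho x * rho y) /\ (forall x, rho x != 0).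

Definition rker (gT : finGroupType) (rho : gT -> algC) : {set gT} :=
  [set g | rho g == 1].

Definition level (gT : finGroupType) (p : nat) (rho : gT -> algC) : nat :=
  logn p (size (undup [seq rho g | g : gT])).

Definition ZG (gT : finGroupType) := {ffun gT -> int}.

Definition zg_mul (gT : finGroupType) (a b : ZG gT) : ZG gT :=
  [ffun g => \sum_(h : gT) a h * b (h^-1 * g)%g].

Definition jrho (gT : finGroupType) (rho : gT -> algC) (a : ZG gT) : algC :=
  \sum_(g : gT) (a g)%:~R * rho g.

Definition brho (gT : finGroupType) (p : nat) (rho : gT -> algC) : ZG gT :=
  if level p rho == 0%N then [ffun _ => 1]
  else [ffun x => (rho x == 1)%:Z - (rho x == omega p 1)%:Z].

Definition in_b_ideal (gT : finGroupType) (p n : nat) (reps : 'I_n -> gT -> algC)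
  (a : ZG gT) : Prop :=
  exists r : 'I_n -> ZG gT,
    a = [ffun g => \sum_(i < n) zg_mul (r i) (brho p (reps i)) g].

(* S = (+)_rho Z[omega_{k(rho)}], elements are tuples indexed by 'I_n *)
Definition inS (gT : finGroupType) (p n : nat) (reps : 'I_n -> gT -> algC)
  (s : 'I_n -> algC) : Prop :=
  forall i, inZomega p (level p (reps i)) (s i).

Definition is_S_ideal (gT : finGroupType) (p n : nat) (reps : 'I_n -> gT -> algC)
  (I : ('I_n -> algC) -> Prop) : Prop :=
  [/\ forall s, I s -> inS p reps s,
      I (fun _ => 0),
      forall s t, I s -> I t -> I (fun i => s i + t i),
      forall s, I s -> I (fun i => - s i) &
      forall s t, I s -> inS p reps t -> I (fun i => t i * s i)].

Definition in_R_image (gT : finGroupType) (n : nat) (reps : 'I_n -> gT -> algC)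
  (s : 'I_n -> algC) : Prop :=
  exists a : ZG gT, forall i, s i = jrho (reps i) a.

From HB Require Import structures.
From mathcomp Require Import all_boot all_order all_algebra all_fingroup all_solvable.
From mathcomp Require Import all_field all_character.
From mathcomp Require Import ring.
(* Imported last: mxrepresentation (in all_character) also defines [rker]. *)
Set Implicit Arguments. Unset Strict Implicit. Unset Printing Implicit Defensive.
Import Order.TTheory GRing.Theory Num.Theory.
Local Open Scope ring_scope.

(* For inequivalent rho and sigma, j_sigma(b_rho) = 0, while j_rho(b_rho) is
   |ker rho| (1 - omega) (or |G| for rho = 1); so the ideal generated by the b_rho
   embeds into S as the product ideal of the j_rho(b_rho) Z[omega_k(rho)], which is
   an S-ideal lying in R. Conversely, if an S-ideal I lies in R and s is in I, the
   rho-component of s comes from some a in Z[G] on which every character with kernel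
   other than ker rho vanishes (characters with equal kernels are Galois conjugate).
   Fourier inversion then makes a constant on the cosets of ker rho, with zero sum
   along the cosets of the order-p subgroup of G / ker rho; this forces j_rho(a) into
   |ker rho| (1 - omega) Z[omega_k].
   That omega_k = ((p^k).-root (-1))^2 is a primitive p^k-th root of unity
   comes from the maximality of the real part of (p^k).-root (-1) among the
   (p^k)-th roots of -1, through a Chebyshev-type product over the p-th roots. *)

Lemma expr_gcdn_eq1 (R : nzRingType) (x : R) a b :
  (0 < b)%N -> x ^+ a = 1 -> x ^+ b = 1 -> x ^+ gcdn a b = 1.
Proof.
move=> b_gt0 xa xb; have [d x_d d_b] := prim_order_exists b_gt0 xb.
apply/eqP; rewrite -(prim_order_dvd x_d) dvdn_gcd d_b andbT.
by rewrite (prim_order_dvd x_d) xa.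
Qed.

Lemma conjC_unity_root (w : algC) n : (0 < n)%N -> w ^+ n = 1 -> w^* = w^-1.
Proof.
move=> n_gt0 wn; have w_norm : `|w| = 1.
  by apply/eqP; rewrite -(pexpr_eq1 n_gt0) // -normrX wn normr1.
by rewrite invC_norm w_norm expr1n invr1 mul1r.
Qed.

Lemma Re_rootCN1_max n (y : algC) : (0 < n)%N -> y ^+ n = -1 ->
  'Re y <= 'Re (n.-root (-1)).
Proof.
move=> n_gt0 yn; have [Im_ge0|Im_lt0] := real_ge0P (Creal_Im y).
  exact: rootC_Re_max.
rewrite -Re_conj; apply: rootC_Re_max => //.
  by rewrite -rmorphXn /= yn rmorphN1.
by rewrite Im_conj oppr_ge0 ltW.
Qed.

Lemma prodrN_seq (R : comNzRingType) (I : Type) (r : seq I) (F : I -> R) :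
  \prod_(i <- r) - F i = (-1) ^+ size r * \prod_(i <- r) F i.
Proof.
elim: r => [|i r IHr]; first by rewrite !big_nil mul1r.
by rewrite !big_cons IHr exprS mulrACA mulN1r.
Qed.

Lemma XnsubC_prod_roots (F : closedFieldType) (z : F) n : (0 < n)%N ->
  exists r : seq F, size r = n /\ forall x, \prod_(w <- r) (x - w) = x ^+ n - z.
Proof.
move=> n_gt0; have [r Dq] := closed_field_poly_normal ('X^n - z%:P : {poly F}).
rewrite lead_coefXnsubC // scale1r in Dq; exists r; split.
  by have := size_XnsubC z n_gt0; rewrite Dq size_prod_XsubC => -[].
move=> x; have := congr1 (horner^~ x) Dq; rewrite horner_prod !hornerE => ->.
by apply: eq_bigr => w _; rewrite hornerXsubC.
Qed.

Section RootCN1.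
Variables (p M : nat).
Hypothesis p_odd : odd p.
Let n := (p * M)%N.
Let z : algC := n.-root (-1).
Hypothesis zM : z ^+ M = -1.

Let M_gt0 : (0 < M)%N.
Proof.
by case: M zM => // /eqP; rewrite expr0 -subr_eq0 opprK -(natrD _ 1 1) pnatr_eq0.
Qed.

Let n_gt0 : (0 < n)%N. Proof. by rewrite muln_gt0 M_gt0 andbT; case: p p_odd. Qed.

Let unit_rootN1 (y : algC) : y ^+ n = -1 -> y != 0 /\ y^* = y^-1.
Proof.
move=> yn; split.
  apply/eqP=> y0; move: yn; rewrite y0 expr0n gtn_eqF // => /eqP.
  by rewrite eq_sym oppr_eq0 oner_eq0.
apply: (@conjC_unity_root _ (n * 2)); first by rewrite muln_gt0 n_gt0.
by rewrite exprM yn sqrrN expr1n.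
Qed.

Let ReE2 (y : algC) : y + y^* = 2%:R * 'Re y.
Proof. by rewrite ReE mulrC divfK ?pnatr_eq0. Qed.

Let zn : z ^+ n = -1. Proof. by rewrite rootCK. Qed.

(* The p-th roots w of z are n-th roots of -1, hence Re w <= Re z; the product of
   the 2 Re z - 2 Re w is 2 Re (z ^+ p) - 2 Re z <= 0, so one factor vanishes. *)
Lemma rootCN1_root_eq_Re : exists2 w, w ^+ p = z & z + z^* = w + w^*.
Proof.
have p_gt0 : (0 < p)%N by case: p p_odd.
have [z_neq0 z_conj] := unit_rootN1 zn.
have [r [size_r prod_r]] := XnsubC_prod_roots z p_gt0.
have r_root w : w \in r -> w ^+ p = z.
  move=> wr; have := prod_r w; rewrite (big_rem w wr) /= subrr mul0r.
  by move/esym/eqP; rewrite subr_eq0 => /eqP.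
have [w_neq0 w_conj] : (forall w, w \in r -> w != 0) /\ (forall w, w \in r -> w^* = w^-1).
  by split=> w /r_root wp; have [] := @unit_rootN1 w; rewrite // /n exprM wp.
have sign_p : (-1) ^+ p = -1 :> algC by rewrite -signr_odd p_odd.
have prod_rN x : \prod_(w <- r) (w - x) = - (x ^+ p - z).
  rewrite -prod_r -mulN1r -sign_p -size_r -prodrN_seq.
  by apply: eq_bigr => w _; rewrite opprB.
have prod_r0 : \prod_(w <- r) w = z.
  have := prod_rN 0; rewrite expr0n gtn_eqF // sub0r opprK => <-.
  by apply: eq_bigr => w _; rewrite subr0.
have chebyshev :
    \prod_(w <- r) ((z + z^*) - (w + w^*)) = (z ^+ p + (z ^+ p)^*) - (z + z^*).
  rewrite (eq_big_seq (fun w => (z - w) * (w - z^-1) * w^-1)); last first.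
    by move=> w wr; rewrite z_conj w_conj //; field; rewrite w_neq0.
  rewrite !big_split /= prodfV prod_r prod_rN prod_r0 rmorphXn /= z_conj exprVn.
  by field; rewrite z_neq0 expf_neq0.
have factor_ge0 w : w \in r -> 0 <= (z + z^*) - (w + w^*).
  move=> wr; rewrite !ReE2 subr_ge0 ler_pM2l ?ltr0n // Re_rootCN1_max //.
  by rewrite /n exprM r_root.
have chebyshev_le0 : (z ^+ p + (z ^+ p)^*) - (z + z^*) <= 0.
  have zpn : (z ^+ p) ^+ n = -1 by rewrite -exprM mulnC exprM zn sign_p.
  by rewrite !ReE2 subr_le0 ler_pM2l ?ltr0n // Re_rootCN1_max.
have : \prod_(w <- r) ((z + z^*) - (w + w^*)) == 0.
  by rewrite eq_le {1}chebyshev chebyshev_le0 big_seq prodr_ge0.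
rewrite prodf_seq_eq0 => /hasP[w wr]; rewrite subr_eq0 => /eqP Re_w.
by exists w; first exact: r_root.
Qed.

Lemma rootCN1_expr_odd : z ^+ p = z \/ z ^+ p = z^-1.
Proof.
have [z_neq0 z_conj] := unit_rootN1 zn.
have [w wp Re_w] := rootCN1_root_eq_Re.
have [w_neq0 w_conj] : w != 0 /\ w^* = w^-1 by apply: unit_rootN1; rewrite /n exprM wp.
have : (w - z) * (w - z^-1) == 0.
  have -> : (w - z) * (w - z^-1) = - w * ((z + z^*) - (w + w^*)).
    by rewrite z_conj w_conj; field; rewrite z_neq0 w_neq0.
  by rewrite Re_w subrr mulr0.
rewrite mulf_eq0 !subr_eq0 => /orP[] /eqP wz; move: wp; rewrite wz; first by left.
by rewrite exprVn => zp; right; rewrite -[in RHS]zp invrK.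
Qed.
End RootCN1.

Lemma rootCN1_expr_neq1 p K : prime p ->
  (p ^ K.+1)%N.-root (-1) ^+ (2 * p ^ K) != 1 :> algC.
Proof.
move=> p_pr; set M := (p ^ K)%N; rewrite expnS -/M; set z : algC := _.-root _.
have p_gt1 := prime_gt1 p_pr; have M_gt0 : (0 < M)%N by rewrite expn_gt0 ltnW.
have zn : z ^+ (p * M) = -1 by rewrite rootCK // muln_gt0 ltnW.
have N1_neq1 : (-1 : algC) != 1 by rewrite eq_sym -subr_eq0 opprK -(natrD _ 1 1) pnatr_eq0.
apply/eqP => z2M.
have zM : z ^+ M = -1.
  have : (z ^+ M) ^+ 2 == 1 by rewrite -exprM mulnC z2M.
  rewrite sqrf_eq1 => /orP[/eqP zM1|/eqP //].
  by move/eqP: zn; rewrite mulnC exprM zM1 expr1n eq_sym (negbTE N1_neq1).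
have p_odd : odd p.
  case/even_prime: p_pr => // p2; move/eqP: zn.
  by rewrite p2 mulnC exprM zM sqrrN expr1n eq_sym (negbTE N1_neq1).
have z2 : z ^+ 2 = 1.
  have z2_of q : coprime q p -> z ^+ q = 1 -> z ^+ 2 = 1.
    move=> qp zq; have := expr_gcdn_eq1 _ zq z2M.
    rewrite muln_gt0 M_gt0 Gauss_gcdl ?coprimeXr // => /(_ isT) zg.
    by rewrite -(divnK (dvdn_gcdr q 2)) mulnC exprM zg expr1n.
  have z_neq0 : z != 0 by rewrite rootC_eq0 ?oppr_eq0 ?oner_eq0 // muln_gt0 ltnW.
  have [zp|zp] := rootCN1_expr_odd p_odd zM.
    apply: (z2_of p.-1); first by rewrite coprimePn // ltnW.
    by apply: (mulIf z_neq0); rewrite mul1r -exprSr prednK // ltnW.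
  apply: (z2_of p.+1); first exact: coprimeSn.
  by rewrite exprSr zp mulVf.
have : z < 0.
  have -> : z = z ^+ M by rewrite -(expr_mod M z2) modn2 oddX p_odd orbT expr1.
  by rewrite zM ltrN10.
by rewrite rootC_lt0 // (@leq_trans p) // leq_pmulr.
Qed.

Lemma omega_prim p k : prime p -> (p ^ k).-primitive_root (omega p k).
Proof.
move=> p_pr; have pk_gt0 : (0 < p ^ k)%N by rewrite expn_gt0 prime_gt0.
have omega_unity : omega p k ^+ (p ^ k) = 1.
  by rewrite /omega -exprM mulnC exprM rootCK // sqrrN expr1n.
have [m m_prim /(dvdn_pfactor _ _ p_pr)[j j_le_k Dm]] :=
  prim_order_exists pk_gt0 omega_unity.
rewrite Dm in m_prim; have [k_le_j|j_lt_k] := leqP k j.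
  by move: m_prim; rewrite (@anti_leq j k) ?j_le_k.
move: m_prim; case: k j_lt_k {j_le_k pk_gt0 omega_unity} => // K j_le_K m_prim.
have : omega p K.+1 ^+ (p ^ K) = 1.
  by apply/eqP; rewrite -(prim_order_dvd m_prim) dvdn_exp2l.
by move/eqP; rewrite /omega -exprM (negbTE (rootCN1_expr_neq1 K p_pr)).
Qed.

Section Omega1.
Variable p : nat.
Hypothesis p_pr : prime p.

Lemma omega1_prim : p.-primitive_root (omega p 1).
Proof. by rewrite -[p in p.-primitive_root _]expn1; apply: omega_prim. Qed.

Lemma omega1_neq0 : omega p 1 != 0.
Proof. by rewrite (prim_root_eq0 omega1_prim) -lt0n prime_gt0. Qed.

Lemma omega1_expr (x : algC) j : x ^+ (p ^ j) = 1 -> x != 1 ->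
  exists m, x ^+ m = omega p 1.
Proof.
move=> x_unity x_neq1; have pj_gt0 : (0 < p ^ j)%N by rewrite expn_gt0 prime_gt0.
have [d x_prim] := prim_order_exists pj_gt0 x_unity.
case/(dvdn_pfactor _ _ p_pr) => i _ Dd; rewrite {d}Dd in x_prim.
have i_gt0 : (0 < i)%N.
  rewrite lt0n; apply: contra_neq x_neq1 => i0.
  by rewrite -[x]expr1 -(expn0 p) -i0 (prim_expr_order x_prim).
have xp_prim : p.-primitive_root (x ^+ (p ^ i %/ p)).
  by apply: (dvdn_prim_root x_prim); rewrite -{1}(expn1 p) dvdn_exp2l.
have [m ->] := prim_rootP xp_prim (prim_expr_order omega1_prim).
by exists (p ^ i %/ p * m)%N; rewrite exprM.
Qed.
End Omega1.

Lemma sum_expr_unity_eq0 (R : idomainType) (c : R) n : c != 1 -> c ^+ n = 1 ->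
  \sum_(i < n) c ^+ i = 0.
Proof.
move=> c_neq1 cn; have /esym/eqP := subrX1 c n.
by rewrite cn subrr mulf_eq0 subr_eq0 (negbTE c_neq1) => /eqP.
Qed.

Section GroupRing.
Variable gT : finGroupType.
Implicit Types (a b : ZG gT) (rho : gT -> algC).

Lemma jrhoD rho a b : jrho rho [ffun g => a g + b g] = jrho rho a + jrho rho b.
Proof.
by rewrite /jrho -big_split; apply: eq_bigr => g _; rewrite ffunE rmorphD mulrDl.
Qed.

Lemma jrhoN rho a : jrho rho [ffun g => - a g] = - jrho rho a.
Proof.
by rewrite /jrho -sumrN; apply: eq_bigr => g _; rewrite ffunE rmorphN mulNr.
Qed.

Lemma jrho0 rho : jrho rho [ffun _ => 0] = 0.
Proof. by rewrite /jrho big1 // => g _; rewrite ffunE mul0r. Qed.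

Lemma jrho_sum rho n (F : 'I_n -> ZG gT) :
  jrho rho [ffun g => \sum_(i < n) F i g] = \sum_(i < n) jrho rho (F i).
Proof.
rewrite /jrho exchange_big; apply: eq_bigr => g _.
by rewrite ffunE rmorph_sum mulr_suml.
Qed.

Lemma jrho_delta rho h (c : int) :
  jrho rho [ffun g => (g == h)%:Z * c] = c%:~R * rho h.
Proof.
rewrite /jrho (bigD1 h) //= big1 ?addr0; first by rewrite ffunE eqxx mul1r.
by move=> g /negbTE gh; rewrite ffunE gh !mul0r.
Qed.

Definition in_jrho_image rho (x : algC) : Prop := exists a : ZG gT, x = jrho rho a.

Section Representation.
Variable rho : gT -> algC.
Hypothesis rho_rep : is_rep rho.

Lemma repM x y : rho (x * y)%g = rho x * rho y. Proof. exact: rho_rep.1. Qed.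

Lemma rep_neq0 x : rho x != 0. Proof. exact: rho_rep.2. Qed.

Lemma rep1 : rho 1%g = 1.
Proof. by apply: (mulfI (rep_neq0 1%g)); rewrite -repM mulg1 mulr1. Qed.

Lemma repX x m : rho (x ^+ m)%g = rho x ^+ m.
Proof. by elim: m => [|m IHm]; rewrite ?expg0 ?rep1 // expgS exprS repM IHm. Qed.

Lemma repV x : rho x^-1%g = (rho x)^-1.
Proof. by apply: (mulfI (rep_neq0 x)); rewrite -repM mulgV rep1 divff ?rep_neq0. Qed.

Lemma rep_unity x : rho x ^+ #|gT| = 1.
Proof. by rewrite -repX -cardsT expg_cardG ?inE // rep1. Qed.

Lemma jrhoM a b : jrho rho (zg_mul a b) = jrho rho a * jrho rho b.
Proof.
rewrite /jrho /zg_mul mulr_suml; under eq_bigr do rewrite ffunE rmorph_sum mulr_suml.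
rewrite exchange_big; apply: eq_bigr => h _.
rewrite (reindex_inj (mulgI h)) mulr_sumr; apply: eq_bigr => g _.
by rewrite mulKg repM rmorphM; ring.
Qed.

Lemma sum_rep_eq0 (P : pred gT) y : rho y != 1 -> (forall x, P (y * x)%g = P x) ->
  \sum_(x | P x) rho x = 0.
Proof.
move=> rho_y_neq1 P_y; set S := \sum_(x | P x) rho x.
have : S = rho y * S.
  rewrite {1}/S (reindex_inj (mulgI y)) mulr_sumr.
  by apply: eq_big => [x|x _]; rewrite ?P_y ?repM.
move/eqP; rewrite -subr_eq0 -{1}[S]mul1r -mulrBl mulf_eq0 subr_eq0 eq_sym.
by rewrite (negbTE rho_y_neq1) => /eqP.
Qed.

Lemma in_jrho_image_rep g : in_jrho_image rho (rho g).
Proof. by exists [ffun h => (h == g)%:Z * 1]; rewrite jrho_delta mul1r. Qed.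

Lemma in_jrho_image_repX g m : in_jrho_image rho (rho g ^+ m).
Proof. by rewrite -repX; apply: in_jrho_image_rep. Qed.

Lemma in_jrho_image_int (c : int) : in_jrho_image rho c%:~R.
Proof. by exists [ffun h => (h == 1%g)%:Z * c]; rewrite jrho_delta rep1 mulr1. Qed.

Lemma in_jrho_imageD x y :
  in_jrho_image rho x -> in_jrho_image rho y -> in_jrho_image rho (x + y).
Proof. by move=> [a ->] [b ->]; exists [ffun g => a g + b g]; rewrite jrhoD. Qed.

Lemma in_jrho_imageM x y :
  in_jrho_image rho x -> in_jrho_image rho y -> in_jrho_image rho (x * y).
Proof. by move=> [a ->] [b ->]; exists (zg_mul a b); rewrite jrhoM. Qed.

Lemma in_jrho_image_sum I (r : seq I) (P : pred I) (F : I -> algC) :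
  (forall i, P i -> in_jrho_image rho (F i)) ->
  in_jrho_image rho (\sum_(i <- r | P i) F i).
Proof.
move=> F_img; elim/big_ind: _ => //; last exact: in_jrho_imageD.
by rewrite -(mulr0z 1); apply: (in_jrho_image_int 0).
Qed.

End Representation.
End GroupRing.

Lemma size_rep_image (gT : finGroupType) (rho : gT -> algC) g0 N : is_rep rho ->
  N.-primitive_root (rho g0) -> (forall g, rho g ^+ N = 1) ->
  size (undup [seq rho g | g : gT]) = N.
Proof.
move=> rho_rep g0_prim rho_unity; set L := [seq rho g0 ^+ i | i <- iota 0 N].
have L_uniq : uniq L.
  rewrite map_inj_in_uniq ?iota_uniq // => i j; rewrite !mem_iota !add0n /= => iN jN.
  by move/eqP; rewrite (eq_prim_root_expr g0_prim) !modn_small // => /eqP.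
rewrite (perm_size (uniq_perm (undup_uniq _) L_uniq _)) ?size_map ?size_iota // => x.
rewrite mem_undup; apply/imageP/mapP => [[g _ ->]|[i _ ->]].
  have [i ->] := prim_rootP g0_prim (rho_unity g).
  by exists (val i); rewrite // mem_iota add0n /=.
by exists (g0 ^+ i)%g; rewrite ?repX.
Qed.

Section Level.
Variables (gT : finGroupType) (p e : nat).
Hypotheses (p_pr : prime p) (cardG : #|gT| = (p ^ e)%N).
Variable rho : gT -> algC.
Hypothesis rho_rep : is_rep rho.
Local Notation k := (level p rho).

(* The image of rho is cyclic: in a p-group the orders of the rho g are
   totally ordered by divisibility, so an element of maximal order generates. *)
Lemma rep_level_gen : exists2 g0, (p ^ k).-primitive_root (rho g0) &
  forall g, rho g ^+ (p ^ k) = 1.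
Proof.
have card_gt0 : (0 < #|gT|)%N by rewrite cardG expn_gt0 prime_gt0.
pose d g := s2val (prim_order_exists card_gt0 (rep_unity rho_rep g)).
have d_prim g : (d g).-primitive_root (rho g) by rewrite /d; case: prim_order_exists.
have d_pow g : exists2 j, (j <= e)%N & d g = (p ^ j)%N.
  by apply/dvdn_pfactor; rewrite // -cardG /d; case: prim_order_exists.
have [g0 _ g0_max] := arg_maxnP d (isT : predT 1%g).
have [j0 _ d_g0] := d_pow g0.
have rho_unity g : rho g ^+ d g0 = 1.
  apply/eqP; rewrite -(prim_order_dvd (d_prim g)); have [j _ d_g] := d_pow g.
  rewrite d_g d_g0 dvdn_exp2l // -(leq_exp2l _ _ (prime_gt1 p_pr)) -d_g -d_g0.
  exact: g0_max.
have -> : k = j0 by rewrite /level (size_rep_image rho_rep (d_prim g0)) // d_g0 pfactorK.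
by exists g0; rewrite -d_g0.
Qed.

Lemma rep_unity_level g : rho g ^+ (p ^ k) = 1.
Proof. by have [g0 _ ->] := rep_level_gen. Qed.

Lemma rep_level0 : k = 0%N -> forall g, rho g = 1.
Proof. by move=> k0 g; rewrite -[rho g]expr1 -(expn0 p) -k0 rep_unity_level. Qed.

Lemma rep_omega1 g : rho g != 1 -> exists m, rho (g ^+ m)%g = omega p 1.
Proof.
move=> rho_g_neq1; have [m rho_gm] := omega1_expr p_pr (rep_unity_level g) rho_g_neq1.
by exists m; rewrite repX.
Qed.

Lemma level_gt0_omega1 : (0 < k)%N -> exists xi, rho xi = omega p 1.
Proof.
move=> k_gt0; have [g0 g0_prim _] := rep_level_gen.
have [|m rho_g0m] := @rep_omega1 g0; last by exists (g0 ^+ m)%g.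
apply: contraTneq k_gt0 => rho_g0; have := prim_order_dvd g0_prim 1.
by rewrite rho_g0 expr1 eqxx dvdn1 -(expn0 p) eqn_exp2l ?prime_gt1 // => /eqP ->.
Qed.

Lemma in_jrho_imageE x : in_jrho_image rho x <-> inZomega p k x.
Proof.
split.
  case=> a ->; rewrite /jrho.
  have tP g : {t : 'I_(p ^ k)%N | rho g = omega p k ^+ t}.
    by case: (prim_rootP (omega_prim k p_pr) (rep_unity_level g)) => t Et; exists t.
  exists (p ^ k)%N, (fun i => \sum_(g | sval (tP g) == i) a g).
  rewrite (partition_big (fun g => sval (tP g)) predT) //=.
  apply: eq_bigr => i _; rewrite rmorph_sum mulr_suml; apply: eq_bigr => g /eqP Eg.
  by rewrite (svalP (tP g)) Eg.
case=> m [c ->]; apply: (in_jrho_image_sum rho_rep) => i _.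
apply: (in_jrho_imageM rho_rep); first exact: in_jrho_image_int.
have [g0 g0_prim _] := rep_level_gen.
have [t ->] := prim_rootP g0_prim (prim_expr_order (omega_prim k p_pr)).
by rewrite -exprM -repX //; apply: in_jrho_image_rep.
Qed.

End Level.

Lemma prim_root_eq_unity (R : idomainType) n (x y : R) :
  (forall j, (x ^+ j == 1) = (y ^+ j == 1)) ->
  n.-primitive_root x = n.-primitive_root y.
Proof.
by move=> xy; congr (_ && _); apply: eq_forallb => i; rewrite !unity_rootE xy.
Qed.

Section Kernels.
Variables (gT : finGroupType) (p e : nat).
Hypotheses (p_pr : prime p) (cardG : #|gT| = (p ^ e)%N).
Variables s c : gT -> algC.
Hypotheses (s_rep : is_rep s) (c_rep : is_rep c) (rker_sc : rker s = rker c).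

Lemma rep_eq_rker g h : s g = s h -> c g = c h.
Proof.
move=> sgh; have : (g * h^-1)%g \in rker s.
  by rewrite inE repM ?repV // sgh divff ?rep_neq0.
rewrite rker_sc inE repM ?repV // => /eqP/(canRL (divfK (rep_neq0 c_rep h))).
by rewrite mul1r.
Qed.

Lemma rep_eq_rker_expr : exists2 m, coprime m (p ^ level p s) &
  forall g, c g = s g ^+ m.
Proof.
have [g0 g0_prim s_unity] := rep_level_gen p_pr cardG s_rep.
have c_g0_prim : (p ^ level p s).-primitive_root (c g0).
  rewrite (@prim_root_eq_unity _ _ (c g0) (s g0)) // => j.
  have := congr1 (fun K : {set gT} => (g0 ^+ j)%g \in K) rker_sc.
  by rewrite /= !inE !repX // => <-.
have [m Dm] := prim_rootP g0_prim (prim_expr_order c_g0_prim).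
exists m; first by rewrite -(prim_root_exp_coprime _ g0_prim) -Dm.
move=> g; have [t Dt] := prim_rootP g0_prim (s_unity g).
have -> : c g = c (g0 ^+ t)%g by apply: rep_eq_rker; rewrite repX.
by rewrite repX // Dm Dt -!exprM mulnC.
Qed.

(* Representations with the same kernel are Galois conjugate. *)
Lemma jrho_eq_rker_eq0 (a : ZG gT) : jrho s a = 0 -> jrho c a = 0.
Proof.
have [m m_coprime c_s] := rep_eq_rker_expr.
have [u u_root] := Qn_aut_exists m_coprime.
have -> : jrho c a = u (jrho s a).
  rewrite /jrho rmorph_sum; apply: eq_bigr => g _.
  by rewrite rmorphM rmorph_int u_root ?c_s // (rep_unity_level p_pr cardG s_rep).
by move->; rewrite rmorph0.
Qed.

End Kernels.

Section BRho.
Variables (gT : finGroupType) (p e : nat).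
Hypotheses (p_pr : prime p) (cardG : #|gT| = (p ^ e)%N).
Variables s rho : gT -> algC.
Hypotheses (s_rep : is_rep s) (rho_rep : is_rep rho).

Lemma jrho_brho_level0 : level p rho = 0%N -> jrho s (brho p rho) = \sum_g s g.
Proof.
by move=> k0; rewrite /brho k0 eqxx /jrho; apply: eq_bigr => g _; rewrite ffunE mul1r.
Qed.

Lemma jrho_brho_level_gt0 xi : (0 < level p rho)%N -> rho xi = omega p 1 ->
  jrho s (brho p rho) = (1 - s xi) * \sum_(x | rho x == 1) s x.
Proof.
move=> k_gt0 rho_xi; rewrite /brho eqn0Ngt k_gt0 /jrho.
transitivity (\sum_(g | rho g == 1) s g - \sum_(g | rho g == omega p 1) s g).
  rewrite !(big_mkcond (fun g => rho g == _)) -sumrB.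
  by apply: eq_bigr => g _; rewrite ffunE rmorphB /= -!pmulrn mulrBl !mulr_natl !mulrb.
rewrite [X in _ - X](reindex_inj (mulgI xi)) mulrBl mul1r mulr_sumr; congr (_ - _).
apply: eq_big => [x|x _]; last exact: repM.
by rewrite repM // rho_xi -{2}[omega p 1]mulr1 (inj_eq (mulfI (omega1_neq0 p_pr))).
Qed.

Lemma rker_eq_subset xi : rho xi = omega p 1 -> s xi != 1 ->
  rker rho \subset rker s -> rker s = rker rho.
Proof.
move=> rho_xi s_xi ker_sub; apply/eqP; rewrite eqEsubset ker_sub andbT.
apply/subsetP => g; rewrite !inE => /eqP s_g; apply: contraR s_xi => rho_g.
have [m rho_gm] := rep_omega1 p_pr cardG rho_rep rho_g.
have : (xi^-1 * g ^+ m)%g \in rker rho.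
  by rewrite inE repM ?repV // rho_xi rho_gm mulVf ?omega1_neq0.
by move/(subsetP ker_sub); rewrite inE repM ?repV ?repX // s_g expr1n mulr1 invr_eq1.
Qed.

Lemma jrho_brho_eq0 : rker s != rker rho -> jrho s (brho p rho) = 0.
Proof.
move=> ker_neq; have [k0|k_gt0] := posnP (level p rho).
  rewrite jrho_brho_level0 //; have [y s_y] : exists y, s y != 1.
    apply/existsP; apply: contraR ker_neq => /existsPn s_triv; apply/eqP/setP => g.
    by rewrite !inE (rep_level0 p_pr cardG rho_rep k0) (negPn (s_triv g)) eqxx.
  exact: (sum_rep_eq0 (P := predT) s_rep s_y).
have [xi rho_xi] := level_gt0_omega1 p_pr cardG rho_rep k_gt0.
rewrite (jrho_brho_level_gt0 k_gt0 rho_xi).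
have [ker_sub|/subsetPn[y]] := boolP (rker rho \subset rker s); last first.
  rewrite !inE => /eqP rho_y s_y; rewrite (sum_rep_eq0 s_rep s_y) ?mulr0 //.
  by move=> x; rewrite repM // rho_y mul1r.
have [/eqP ->|s_xi] := boolP (s xi == 1); first by rewrite subrr mul0r.
by case/eqP: ker_neq; apply: rker_eq_subset s_xi ker_sub.
Qed.

End BRho.

Lemma jrho_brho_self (gT : finGroupType) (p e : nat) (rho : gT -> algC) :
  prime p -> #|gT| = (p ^ e)%N -> is_rep rho -> (0 < level p rho)%N ->
  jrho rho (brho p rho) = #|rker rho|%:R * (1 - omega p 1).
Proof.
move=> p_pr cardG rho_rep k_gt0.
have [xi rho_xi] := level_gt0_omega1 p_pr cardG rho_rep k_gt0.
rewrite (jrho_brho_level_gt0 p_pr rho_rep rho_rep k_gt0 rho_xi) rho_xi mulrC.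
rewrite (eq_bigr (fun=> 1)) => [|x /eqP //]; rewrite sumr_const; congr (_ *+ _ * _).
by apply: eq_card => x; rewrite inE.
Qed.

Section Fourier.
Variable gT : finGroupType.
Hypothesis abG : abelian [set: gT].
Local Notation G := [set: gT]%G.

Lemma irr_rep (t : Iirr G) : is_rep (fun x => 'chi_t x).
Proof.
have chi_lin : 'chi_t \is a linear_char by apply/char_abelianP.
by split=> [x y|x]; rewrite ?(lin_charM chi_lin) ?(lin_char_neq0 chi_lin) ?inE.
Qed.

Lemma irr_orthogonality_abelian (g h : gT) :
  \sum_(t : Iirr G) 'chi_t g * ('chi_t h)^* = #|gT|%:R *+ (g == h).
Proof.
have cent x : ('C_G[x])%g = G by apply/setIidPl; rewrite sub_cent1 (subsetP abG) ?inE.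
have class_h : (g \in h ^: G)%g = (g == h).
  apply/imsetP/eqP => [[z _ ->]|->]; last by exists 1%g; rewrite ?inE ?conjg1.
  by rewrite conjgE (centsP abG h _ z) ?inE ?mulKg.
by rewrite second_orthogonality_relation ?inE // cent cardsT class_h.
Qed.

Lemma fourier_inversion (a : ZG gT) h :
  #|gT|%:R * (a h)%:~R = \sum_(t : Iirr G) jrho (fun x => 'chi_t x) a * ('chi_t h)^*.
Proof.
rewrite /jrho; under eq_bigr do rewrite mulr_suml; rewrite exchange_big /=.
under eq_bigr do
  rewrite -(eq_bigr _ (fun t _ => mulrA _ _ _)) -mulr_sumr irr_orthogonality_abelian.
rewrite (bigD1 h) //= big1 ?addr0 => [|g /negbTE->]; last by rewrite mulr0.
by rewrite eqxx mulr1n mulrC.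
Qed.

End Fourier.

Lemma sum_rker_fiber (gT : finGroupType) (rho : gT -> algC) g0 N (Phi : gT -> algC) :
  is_rep rho -> N.-primitive_root (rho g0) -> (forall g, rho g ^+ N = 1) ->
  (forall g x, rho x = 1 -> Phi (g * x)%g = Phi g) ->
  \sum_g Phi g = #|rker rho|%:R * \sum_(0 <= t < N) Phi (g0 ^+ t)%g.
Proof.
move=> rho_rep g0_prim rho_unity Phi_inv.
pose tau g := sval (prim_rootP g0_prim (rho_unity g)).
have tau_coset g (t : 'I_N) : (tau g == t) = (g \in (g0 ^+ t) *: rker rho)%g.
  have rho_g0t_neq0 : rho g0 ^+ t != 0 by rewrite -repX ?rep_neq0.
  rewrite mem_lcoset inE repM ?repV ?repX // (svalP (prim_rootP g0_prim (rho_unity g))).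
  rewrite -(inj_eq (mulfI rho_g0t_neq0)) mulVKf // mulr1 (eq_prim_root_expr g0_prim).
  by rewrite !modn_small.
rewrite (partition_big tau predT) //= big_mkord mulr_sumr; apply: eq_bigr => t _.
rewrite (eq_bigl (mem ((g0 ^+ t) *: rker rho)%g)) => [|g]; last exact: tau_coset.
rewrite (eq_bigr (fun _ => Phi (g0 ^+ t)%g)) => [|g /lcosetP[x]]; last first.
  by rewrite inE => /eqP rho_x ->; rewrite Phi_inv.
by rewrite sumr_const card_lcoset mulr_natl.
Qed.

Lemma sum_int_expr_factor (R : comNzRingType) n (A : nat -> int) (w : R) :
  \sum_(l < n) A l = 0 ->
  \sum_(l < n) (A l)%:~R * w ^+ l = (w - 1) * \sum_(l < n) (A l)%:~R * \sum_(s < l) w ^+ s.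
Proof.
move=> A_sum0.
have -> : \sum_(l < n) (A l)%:~R * w ^+ l = \sum_(l < n) ((A l)%:~R * w ^+ l - (A l)%:~R).
  by rewrite sumrB -rmorph_sum A_sum0 rmorph0 subr0.
rewrite mulr_sumr; apply: eq_bigr => l _.
by rewrite -[X in _ - X]mulr1 -mulrBr subrX1 mulrCA.
Qed.

Section Core.
Variables (gT : finGroupType) (p e : nat).
Hypotheses (p_pr : prime p) (cardG : #|gT| = (p ^ e)%N) (abG : abelian [set: gT]).
Variable rho : gT -> algC.
Hypothesis rho_rep : is_rep rho.
Variable a : ZG gT.
Hypothesis a_kills : forall c, is_rep c -> rker c != rker rho -> jrho c a = 0.
Local Notation G := [set: gT]%G.
Local Notation k := (level p rho).

Let cardG_neq0 : (#|gT|%:R : algC) != 0.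
Proof. by rewrite pnatr_eq0 -lt0n cardG expn_gt0 prime_gt0. Qed.

Let fourier_a h : #|gT|%:R * (a h)%:~R =
  \sum_(t : Iirr G | rker (fun x => 'chi_t x) == rker rho)
    jrho (fun x => 'chi_t x) a * ('chi_t h)^*.
Proof.
rewrite (fourier_inversion abG).
rewrite (bigID (fun t : Iirr G => rker (fun x => 'chi_t x) == rker rho)) /=.
rewrite [X in _ + X]big1 ?addr0 // => t ker_t.
by rewrite a_kills ?mul0r //; apply: irr_rep.
Qed.

Let rker_irr_eq1 (t : Iirr G) g : rker (fun x => 'chi_t x) = rker rho ->
  ('chi_t g == 1) = (rho g == 1).
Proof.
by move=> ker_t; have := congr1 (fun K : {set gT} => g \in K) ker_t; rewrite /= !inE.
Qed.

Lemma a_rker_invariant h x : rho x = 1 -> a (h * x)%g = a h.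
Proof.
move=> rho_x; apply: (@intr_inj algC); apply: (mulfI cardG_neq0).
rewrite !fourier_a; apply: eq_bigr => t /eqP ker_t.
by rewrite (repM (irr_rep abG t)) (eqP (_ : 'chi_t x == 1)) ?mulr1 // rker_irr_eq1 ?rho_x.
Qed.

Lemma a_coset_sum h y : rho y != 1 -> rho y ^+ p = 1 ->
  \sum_(l < p) a (h * y ^+ l)%g = 0.
Proof.
move=> rho_y_neq1 rho_yp; apply: (@intr_inj algC); apply: (mulfI cardG_neq0).
rewrite rmorph_sum mulr_sumr rmorph0 mulr0; under eq_bigr do rewrite fourier_a.
rewrite exchange_big big1 // => t /eqP ker_t; have chi_rep := irr_rep abG t.
have chi_y_neq1 : 'chi_t y != 1 by rewrite rker_irr_eq1.
have chi_yp : 'chi_t y ^+ p = 1.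
  by apply/eqP; rewrite -(repX chi_rep) rker_irr_eq1 // repX // rho_yp.
rewrite -mulr_sumr; under eq_bigr do rewrite (repM chi_rep) (repX chi_rep) rmorphM rmorphXn.
rewrite -mulr_sumr sum_expr_unity_eq0 ?mulr0 //; last by rewrite -rmorphXn chi_yp rmorph1.
by rewrite (can2_eq conjCK conjCK) rmorph1.
Qed.

Lemma jrho_level_gt0_factor : (0 < k)%N ->
  exists2 Y, in_jrho_image rho Y & jrho rho a = #|rker rho|%:R * (omega p 1 - 1) * Y.
Proof.
move=> k_gt0; have [g0 g0_prim rho_unity] := rep_level_gen p_pr cardG rho_rep.
set M := (p ^ k.-1)%N; have pk : (p ^ k = p * M)%N by rewrite /M -expnS prednK.
have M_gt0 : (0 < M)%N by rewrite expn_gt0 prime_gt0.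
set y := (g0 ^+ M)%g; have rho_y_neq1 : rho y != 1.
  by rewrite repX // -(prim_order_dvd g0_prim) pk gtnNdvd // ltn_Pmull ?prime_gt1.
have rho_yp : rho y ^+ p = 1 by rewrite repX // -exprM mulnC -pk (prim_expr_order g0_prim).
have [xi rho_xi] := level_gt0_omega1 p_pr cardG rho_rep k_gt0.
have [u rho_y_omega] := prim_rootP (omega1_prim p_pr) rho_yp.
pose Z := \sum_(s < u) omega p 1 ^+ s.
have rho_y_sub1 : rho y - 1 = (omega p 1 - 1) * Z by rewrite rho_y_omega subrX1.
pose A r l : int := a (g0 ^+ r * y ^+ l)%g.
pose Y := \sum_(0 <= r < M)
  rho g0 ^+ r * Z * \sum_(l < p) (A r l)%:~R * \sum_(s < l) rho y ^+ s.
have img_omega s : in_jrho_image rho (omega p 1 ^+ s).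
  by rewrite -rho_xi; apply: in_jrho_image_repX.
exists Y.
  apply: (in_jrho_image_sum rho_rep) => r _; apply: (in_jrho_imageM rho_rep).
    apply: (in_jrho_imageM rho_rep); first exact: in_jrho_image_repX.
    by apply: (in_jrho_image_sum rho_rep) => s _.
  apply: (in_jrho_image_sum rho_rep) => l _; apply: (in_jrho_imageM rho_rep).
    exact: in_jrho_image_int.
  by apply: (in_jrho_image_sum rho_rep) => s _; apply: in_jrho_image_repX.
(* Fiber over rker rho and write t < p * M as r + l * M; the coefficients sum to
   zero along each coset of <[y]>, so the factor (rho y) ^+ l may be replaced by
   (rho y) ^+ l - 1, which is divisible by rho y - 1, hence by omega - 1. *)
rewrite /jrho (sum_rker_fiber (Phi := fun g => (a g)%:~R * rho g) rho_rep g0_prim rho_unity);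
  last by move=> g x rho_x; rewrite a_rker_invariant // repM // rho_x mulr1.
rewrite -mulrA; congr (_ * _); rewrite pk big_nat_mul.
under eq_bigr => l _ do rewrite mulSn -{1}[(l * M)%N]add0n big_addn addnK.
under eq_bigr => l _ do under eq_bigr => r _ do
  rewrite expgD [(l * M)%N]mulnC expgM -/y (repM rho_rep)
          (repX rho_rep g0) (repX rho_rep y).
rewrite exchange_big /Y mulr_sumr; apply: eq_bigr => r _; rewrite big_mkord.
under eq_bigr do rewrite mulrCA.
rewrite -mulr_sumr (sum_int_expr_factor (A := A r)) ?a_coset_sum //.
by rewrite rho_y_sub1; ring.
Qed.

Lemma jrho_brho_dvd : exists r : ZG gT, jrho rho a = jrho rho (brho p rho) * jrho rho r.
Proof.
have [k0|k_gt0] := posnP k; last first.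
  have [Y [r ->] ->] := jrho_level_gt0_factor k_gt0.
  exists [ffun g => - r g].
  by rewrite jrhoN (jrho_brho_self p_pr cardG rho_rep k_gt0); ring.
have rho1 := rep_level0 p_pr cardG rho_rep k0.
have a_const g : a g = a 1%g by rewrite -[g]mul1g a_rker_invariant.
exists [ffun g => (g == 1%g)%:Z * a 1%g]; rewrite jrho_delta jrho_brho_level0 // /jrho.
under eq_bigr do rewrite rho1 mulr1 a_const; under [X in _ = X * _]eq_bigr do rewrite rho1.
by rewrite !sumr_const rho1 mulr1 mulr_natl.
Qed.

End Core.

Lemma is_S_ideal_ext (gT : finGroupType) p n (reps : 'I_n -> gT -> algC)
    (I J : ('I_n -> algC) -> Prop) :
  (forall s, I s <-> J s) -> is_S_ideal p reps I -> is_S_ideal p reps J.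
Proof.
move=> IJ [I_S I0 ID IN IM]; split=> [s /IJ/I_S //|||s /IJ/IN/IJ //|s t /IJ/IM Is /Is/IJ //].
  exact/IJ.
by move=> s t /IJ Is /IJ /(ID _ _ Is)/IJ.
Qed.

Section Conductor.
Variables (gT : finGroupType) (p e : nat).
Hypotheses (p_pr : prime p) (cardG : #|gT| = (p ^ e)%N) (abG : abelian [set: gT]).
Variables (n : nat) (reps : 'I_n -> gT -> algC).
Hypotheses (reps_rep : forall i, is_rep (reps i))
  (reps_inequiv : forall i j, rker (reps i) = rker (reps j) -> i = j)
  (reps_cover : forall rho : gT -> algC, is_rep rho -> exists i, rker rho = rker (reps i)).

Definition in_brho_diag (s : 'I_n -> algC) : Prop :=
  exists r : 'I_n -> ZG gT,
    forall j, s j = jrho (reps j) (r j) * jrho (reps j) (brho p (reps j)).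

Lemma jrho_b_ideal j (r : 'I_n -> ZG gT) :
  jrho (reps j) [ffun g => \sum_(i < n) zg_mul (r i) (brho p (reps i)) g] =
    jrho (reps j) (r j) * jrho (reps j) (brho p (reps j)).
Proof.
rewrite jrho_sum (bigD1 j) //= big1 ?addr0 => [|i i_neq_j]; first exact: jrhoM.
rewrite jrhoM // (jrho_brho_eq0 p_pr cardG) ?mulr0 //.
by apply: contra i_neq_j => /eqP/reps_inequiv ->.
Qed.

Lemma in_b_idealE s :
  (exists a, in_b_ideal p reps a /\ forall i, s i = jrho (reps i) a) <-> in_brho_diag s.
Proof.
split=> [[a [[r ->] Es]]|[r Es]]; first by exists r => j; rewrite Es jrho_b_ideal.
exists [ffun g => \sum_(i < n) zg_mul (r i) (brho p (reps i)) g].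
by split=> [|j]; [exists r | rewrite jrho_b_ideal].
Qed.

Lemma in_brho_diag_S_ideal : is_S_ideal p reps in_brho_diag.
Proof.
have imageE i := in_jrho_imageE p_pr cardG (reps_rep i).
split=> [s [r Es] i||s t [r1 E1] [r2 E2]|s [r Es]|s t [r Es] tS].
- apply/imageE; rewrite Es.
  by apply: in_jrho_imageM => //; [exists (r i) | exists (brho p (reps i))].
- by exists (fun _ => [ffun _ => 0]) => j; rewrite jrho0 mul0r.
- by exists (fun i => [ffun g => r1 i g + r2 i g]) => j; rewrite jrhoD E1 E2 mulrDl.
- by exists (fun i => [ffun g => - r i g]) => j; rewrite jrhoN Es mulNr.
have /fin_all_exists[x Ex] i : exists x, t i = jrho (reps i) x by apply/imageE.
by exists (fun i => zg_mul (x i) (r i)) => j; rewrite Ex Es jrhoM // mulrA.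
Qed.

Lemma S_ideal_in_R_sub_brho_diag (I : ('I_n -> algC) -> Prop) :
  is_S_ideal p reps I -> (forall s, I s -> in_R_image reps s) ->
  forall s, I s -> in_brho_diag s.
Proof.
move=> [_ _ _ _ IM] I_R s Is.
suff /fin_all_exists[r Er] i : exists r, s i = jrho (reps i) r * jrho (reps i) (brho p (reps i)).
  by exists r.
pose t j : algC := if j == i then 1 else 0.
have tS : inS p reps t.
  by move=> j; exists 1%N, (fun _ => (j == i)%:Z); rewrite big_ord1 expr0 mulr1 /t; case: eqP.
have [a Ea] := I_R _ (IM _ _ Is tS).
have a_kills c : is_rep c -> rker c != rker (reps i) -> jrho c a = 0.
  move=> c_rep ker_c; have [j Ej] := reps_cover c_rep.
  have j_neq_i : j != i by apply: contra ker_c => /eqP <-; rewrite Ej.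
  apply: (jrho_eq_rker_eq0 p_pr cardG (reps_rep j) c_rep (esym Ej)).
  by rewrite -Ea /t (negbTE j_neq_i) mul0r.
have [r Er] := jrho_brho_dvd p_pr cardG abG (reps_rep i) a_kills.
by exists r; rewrite mulrC -Er -Ea /t eqxx mul1r.
Qed.

End Conductor.

Theorem mainTheorem3 (gT : finGroupType) (p e : nat)
  (pp : prime p) (e_ge1 : (1 <= e)%N)
  (abG : abelian [set: gT]) (cardG : #|gT| = (p ^ e)%N)
  (n : nat) (reps : 'I_n -> gT -> algC)
  (reps_rep : forall i, is_rep (reps i))
  (reps_inequiv : forall i j, rker (reps i) = rker (reps j) -> i = j)
  (reps_cover : forall rho : gT -> algC, is_rep rho ->
                  exists i, rker rho = rker (reps i)) :
  let C := fun s : 'I_n -> algC =>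
    exists a : ZG gT, in_b_ideal p reps a /\ forall i, s i = jrho (reps i) a in
  [/\ is_S_ideal p reps C,
      (forall s, C s -> in_R_image reps s) &
      forall I, is_S_ideal p reps I -> (forall s, I s -> in_R_image reps s) ->
        forall s, I s -> C s].
Proof.
move=> C; have CE s : C s <-> in_brho_diag p reps s.
  exact: (in_b_idealE pp cardG reps_rep reps_inequiv).
split=> [||I I_ideal I_R s Is].
- by apply: is_S_ideal_ext (in_brho_diag_S_ideal pp cardG reps_rep) => s; rewrite CE.
- by move=> s [a [_ Es]]; exists a.
by apply/CE; apply: (S_ideal_in_R_sub_brho_diag pp cardG abG reps_rep reps_cover I_ideal).
Qed.
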